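(* Let $l,t,s,n$ be integers with $t\geq l$, $s\geq l+1\geq 3$ and $n\geq 2\binom{3s}{2}$. Then for every integer $x$ with $1\leq x\leq l-1$, $$ex(n,\{K_{l,t},M_{s+1}\},x)\leq (l-1)n+ex(2(s-l+1)+1,K_{l,t})-\frac{l(l-1)}{2}.$$
   Context: All graphs are finite and simple. $ex(m,K_{l,t})$ is the maximum number of edges of an $m$-vertex graph with no copy of the complete bipartite graph $K_{l,t}$; $M_{s+1}$ is the matching of $s+1$ disjoint edges. For a graph $G$ with matching number at most $s$, say $X\subseteq V(G)$ is admissible if $|X|+\sum_{i=1}^m\lfloor |V(C_i)|/2\rfloor\leq s$, where $C_1,\dots,C_m$ are the components of $G-X$; let $x(G)$ be the maximum size of an admissible set. Let $\mathscr{G}_x$ be the set of graphs on $n$ vertices containing neither $K_{l,t}$ nor $M_{s+1}$ as a subgraph and with $x(G)=x$, and $ex(n,\{K_{l,t},M_{s+1}\},x)=\max_{G\in\mathscr{G}_x}e(G)$. *)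

From mathcomp Require Import all_boot all_order all_algebra.
Set Implicit Arguments. Unset Strict Implicit. Unset Printing Implicit Defensive.

(* A graph on a finite vertex type T is given by its adjacency function
   g : {ffun T * T -> bool}; it is simple when g is symmetric and irreflexive. *)
Definition adj (T : finType) (g : {ffun T * T -> bool}) (u v : T) : bool := g (u, v).

Definition simple_graph (T : finType) (g : {ffun T * T -> bool}) : bool :=
  [forall u, ~~ adj g u u] && [forall u, forall v, adj g u v == adj g v u].

Definition nedges (T : finType) (g : {ffun T * T -> bool}) : nat :=
  #|[set p : T * T | adj g p.1 p.2 & enum_rank p.1 < enum_rank p.2]|.

Definition has_Klt (T : finType) (g : {ffun T * T -> bool}) (l t : nat) : bool :=
  [exists A : {set T}, exists B : {set T}, [&& #|A| == l, #|B| == t, [disjoint A & B] &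
    [forall a in A, forall b in B, adj g a b]]].

Definition has_matching (T : finType) (g : {ffun T * T -> bool}) (k : nat) : bool :=
  [exists M : {set T * T}, [&& #|M| == k,
    [forall e in M, adj g e.1 e.2] &
    [forall e in M, forall f in M, (e != f) ==>
      [disjoint [set e.1; e.2] & [set f.1; f.2]]]]].

Definition comps (T : finType) (g : {ffun T * T -> bool}) (X : {set T}) : {set {set T}} :=
  equivalence_partition
    (fun u v => connect (fun a b => [&& a \notin X, b \notin X & adj g a b]) u v)
    (~: X).

Definition admissible (T : finType) (g : {ffun T * T -> bool}) (s : nat) (X : {set T}) : bool :=
  #|X| + \sum_(C in comps g X) #|C|./2 <= s.

Definition xG (T : finType) (g : {ffun T * T -> bool}) (s : nat) : nat :=
  \max_(X : {set T} | admissible g s X) #|X|.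

Definition ex_Klt (m l t : nat) : nat :=
  \max_(g : {ffun 'I_m * 'I_m -> bool} | simple_graph g && ~~ has_Klt g l t)
    nedges g.

Definition ex_KM (n l t s x : nat) : nat :=
  \max_(g : {ffun 'I_n * 'I_n -> bool} |
          [&& simple_graph g, ~~ has_Klt g l t, ~~ has_matching g s.+1
            & xG g s == x])
    nedges g.

(* Take an admissible X with |X| = x(G) = x.  Edges meeting X number at most
   x(n - x) + C(x, 2).  In G - X every component C has at most 2 floor(|C|/2)
   vertices besides one representative, and these counts sum to at most
   2(s - x); gluing the representatives of all components into a single
   vertex therefore maps G - X edge-injectively onto a graph on 2(s - x) + 1
   vertices, which stays K_{l,t}-free because K_{l,t} is 2-connected for
   l, t >= 2.  For x = l - 1 this gives the bound with ex(2(s - l + 1) + 1, K_{l,t});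
   for x < l - 1 the trivial bound C(2(s - x) + 1, 2) suffices since n is large. *)

From mathcomp Require Import all_boot all_order all_algebra.
From mathcomp Require Import zify.
Set Implicit Arguments. Unset Strict Implicit. Unset Printing Implicit Defensive.

Definition arcs (T : finType) (g : {ffun T * T -> bool}) : {set T * T} :=
  [set p | adj g p.1 p.2].

Lemma card_offdiag (T : finType) (S : {set T}) :
  #|[set p in setX S S | p.1 != p.2]| = #|S| * #|S| - #|S|.
Proof.
have diag : #|setX S S :&: [set p | p.1 == p.2]| = #|S|.
  rewrite -(@card_imset _ _ (fun u => (u, u)) S); last by move=> ? ? [].
  apply: eq_card => -[u v]; rewrite !inE /=; apply/idP/imsetP.
    by case/andP => /andP [uS _] /eqP <-; exists u.
  by case=> w wS [-> ->]; rewrite wS eqxx.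
have offdiag : setX S S :\: [set p | p.1 == p.2] = [set p in setX S S | p.1 != p.2].
  by apply/setP => p; rewrite !inE andbC.
by have := cardsID [set p : T * T | p.1 == p.2] (setX S S); rewrite diag offdiag cardsX; lia.
Qed.

Section SimpleGraph.
Variables (T : finType) (g : {ffun T * T -> bool}).
Hypothesis sg : simple_graph g.

Lemma adj_irr u : adj g u u = false.
Proof. by case/andP: sg => /forallP /(_ u) /negbTE. Qed.

Lemma adj_sym u v : adj g u v = adj g v u.
Proof. by case/andP: sg => _ /forallP /(_ u) /forallP /(_ v) /eqP. Qed.

Lemma card_arcs : #|arcs g| = 2 * nedges g.
Proof.
set E := [set p : T * T | adj g p.1 p.2 & enum_rank p.1 < enum_rank p.2].
pose swap (p : T * T) := (p.2, p.1).
have swapK : involutive swap by case.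
have arcsE : arcs g = E :|: swap @: E.
  apply/setP => -[u v]; rewrite !inE /=; apply/idP/idP => [uv|].
    case: (ltngtP (enum_rank u) (enum_rank v)) => [lt|gt|eq_uv].
    - by rewrite uv.
    - by apply/orP; right; apply/imsetP; exists (v, u); rewrite // inE /= adj_sym uv.
    - by move: uv; rewrite (enum_rank_inj (val_inj eq_uv)) adj_irr.
  case/orP => [/andP [] //|/imsetP [[a b]]]; rewrite inE /= => /andP [ab _] [-> ->].
  by rewrite adj_sym.
have disj : E :&: swap @: E = set0.
  apply/setP => -[u v]; rewrite !inE /=; apply/negP => /andP [/andP [_ lt]].
  by case/imsetP => -[a b]; rewrite inE /= => /andP [_ gt] [eu ev]; move: lt; rewrite eu ev; lia.
rewrite arcsE cardsU disj cards0 card_imset; last exact: can_inj swapK.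
by rewrite subn0 addnn -mul2n.
Qed.

Lemma card_arcs_le : #|arcs g| <= #|T| * #|T| - #|T|.
Proof.
rewrite -cardsT -card_offdiag; apply: subset_leq_card; apply/subsetP => -[u v].
by rewrite !inE /=; apply: contraL => /eqP ->; rewrite adj_irr.
Qed.

End SimpleGraph.

Lemma has_Klt_mono (T : finType) (g g' : {ffun T * T -> bool}) l t :
  (forall u v, adj g u v -> adj g' u v) -> has_Klt g l t -> has_Klt g' l t.
Proof.
move=> sub /existsP [A /existsP [B /and4P [cA cB dAB /forallP adjAB]]].
apply/existsP; exists A; apply/existsP; exists B; rewrite cA cB dAB /=.
apply/forallP => a; apply/implyP => aA; apply/forallP => b; apply/implyP => bB.
by apply: sub; move/implyP: (adjAB a) => /(_ aA) /forallP /(_ b) /implyP; apply.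
Qed.

Section ImageGraph.
Variables (T : finType) (rT : eqType) (g : {ffun T * T -> bool}) (r : T -> rT).
Variables (m : nat) (f : T -> 'I_m) (z : 'I_m).
Hypothesis sg : simple_graph g.
Hypothesis r_edge : forall u v, adj g u v -> r u = r v.
Hypothesis f_inj_class : forall u v, r u = r v -> f u = f v -> u = v.
Hypothesis f_inj_nz : forall u v, f u != z -> f u = f v -> u = v.

Definition image_graph : {ffun 'I_m * 'I_m -> bool} :=
  [ffun p => [exists u, exists v, [&& adj g u v, f u == p.1 & f v == p.2]]].

Lemma adj_image_graphP i j :
  reflect (exists u v, [/\ adj g u v, f u = i & f v = j]) (adj image_graph i j).
Proof.
rewrite /adj ffunE; apply: (iffP existsP) => [[u /existsP [v]]|[u [v [uv <- <-]]]].
  by case/and3P => uv /eqP fu /eqP fv; exists u, v.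
by exists u; apply/existsP; exists v; rewrite !eqxx !andbT.
Qed.

Lemma label_edge_neq u v : adj g u v -> f u != f v.
Proof.
move=> uv; apply/eqP => /(f_inj_class (r_edge uv)) eq_uv.
by move: uv; rewrite eq_uv adj_irr.
Qed.

Lemma image_graph_simple : simple_graph image_graph.
Proof.
apply/andP; split.
  apply/forallP => i; apply/negP => /adj_image_graphP [u [v [uv fu fv]]].
  by move: (label_edge_neq uv); rewrite fu fv eqxx.
apply/forallP => i; apply/forallP => j; apply/eqP.
by apply/adj_image_graphP/adj_image_graphP => -[u [v [uv <- <-]]]; exists v, u; rewrite adj_sym.
Qed.

Lemma arc_label_inj u v u' v' : adj g u v -> adj g u' v' ->
  f u = f u' -> f v = f v' -> u = u' /\ v = v'.
Proof.
move=> uv uv' eq_u eq_v.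
have [z_u|nz_u] := eqVneq (f u) z; last first.
  have eu := f_inj_nz nz_u eq_u; subst u'; split => //.
  by apply: f_inj_class => //; rewrite -(r_edge uv) (r_edge uv').
have nz_v : f v != z by rewrite -z_u eq_sym; apply: label_edge_neq.
have ev := f_inj_nz nz_v eq_v; subst v'; split => //.
by apply: f_inj_class => //; rewrite (r_edge uv) (r_edge uv').
Qed.

Lemma image_graph_arcs : #|arcs g| <= #|arcs image_graph|.
Proof.
rewrite -(@card_in_imset _ _ (fun p => (f p.1, f p.2))); last first.
  move=> [u v] [u' v']; rewrite !inE /= => uv uv' [eq_u eq_v].
  by have [-> ->] := arc_label_inj uv uv' eq_u eq_v.
apply: subset_leq_card; apply/subsetP => _ /imsetP [[u v] uv ->].
by rewrite inE; apply/adj_image_graphP; exists u, v; rewrite inE in uv.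
Qed.

Lemma Klt_lift_class (c : rT) l t (A B : {set 'I_m}) :
  0 < l -> 0 < t -> #|A| = l -> #|B| = t -> [disjoint A & B] ->
  (forall a b, a \in A -> b \in B ->
     exists u v, [/\ adj g u v, r u = c, f u = a & f v = b]) ->
  has_Klt g l t.
Proof.
move=> l_gt0 t_gt0 cA cB dAB arcAB.
have [a0 a0A] : exists a0, a0 \in A by apply/card_gt0P; rewrite cA.
have [b0 b0B] : exists b0, b0 \in B by apply/card_gt0P; rewrite cB.
pose C := [set w | r w == c].
have inj_C : {in C &, injective f}.
  by move=> w w'; rewrite !inE => /eqP rw /eqP rw'; apply: f_inj_class; rewrite rw rw'.
have arcC a b : a \in A -> b \in B ->
    exists u v, [/\ adj g u v, u \in C, v \in C, f u = a & f v = b].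
  move=> aA bB; have [u [v [uv ru fu fv]]] := arcAB a b aA bB.
  by exists u, v; rewrite !inE -(r_edge uv) ru eqxx.
have card_lift (S : {set 'I_m}) : (forall a, a \in S -> exists2 w, w \in C & f w = a) ->
    #|[set w in C | f w \in S]| = #|S|.
  move=> liftS; rewrite -(card_in_imset (f := f)); last first.
    by move=> w w' /setIdP [wC _] /setIdP [w'C _]; apply: inj_C.
  apply: eq_card => a; apply/imsetP/idP => [[w] | aS]; first by rewrite inE => /andP [_ +] ->.
  by have [w wC fw] := liftS a aS; exists w; rewrite // inE wC fw.
have cA' : #|[set w in C | f w \in A]| = l.
  by rewrite card_lift // => a aA; have [u [v [_ uC _ fu _]]] := arcC a b0 aA b0B; exists u.
have cB' : #|[set w in C | f w \in B]| = t.
  by rewrite card_lift // => b bB; have [u [v [_ _ vC _ fv]]] := arcC a0 b a0A bB; exists v.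
apply/existsP; exists [set w in C | f w \in A]; apply/existsP; exists [set w in C | f w \in B].
rewrite cA' cB' !eqxx /=; apply/andP; split.
  rewrite -setI_eq0; apply/eqP/setP => w; rewrite !inE.
  by apply/negP => /andP [/andP [_ wA] /andP [_ wB]]; rewrite (disjointFr dAB wA) in wB.
apply/forallP => w; apply/implyP => /setIdP [wC wA].
apply/forallP => w'; apply/implyP => /setIdP [w'C w'B].
have [u [v [uv uC vC fu fv]]] := arcC _ _ wA w'B.
by rewrite -(inj_C _ _ uC wC fu) -(inj_C _ _ vC w'C fv).
Qed.

Lemma image_graph_Klt l t : 1 < l -> 1 < t -> has_Klt image_graph l t -> has_Klt g l t.
Proof.
move=> l_gt1 t_gt1 /existsP [A /existsP [B /and4P [/eqP cA /eqP cB dAB /forallP adjAB]]].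
have arcAB a b : a \in A -> b \in B -> exists u v, [/\ adj g u v, f u = a & f v = b].
  move=> aA bB; apply/adj_image_graphP.
  by move/implyP: (adjAB a) => /(_ aA) /forallP /(_ b) /implyP; apply.
have nz_in (S : {set 'I_m}) : 1 < #|S| -> exists2 a, a \in S & a != z.
  case/card_gt1P => a [b [aS bS ab]].
  by have [az|] := eqVneq a z; [exists b; rewrite // -az eq_sym | exists a].
have [a1 a1A nz_a1] : exists2 a, a \in A & a != z by apply: nz_in; rewrite cA.
have [b1 b1B nz_b1] : exists2 b, b \in B & b != z by apply: nz_in; rewrite cB.
have [u1 [v1 [uv1 fu1 fv1]]] := arcAB _ _ a1A b1B.
have fiber_nz i u u' : f u = i -> f u' = i -> i != z -> u = u'.
  by move=> fu fu' nz_i; apply: f_inj_nz; rewrite ?fu ?fu'.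
apply: (@Klt_lift_class (r u1) l t A B) => //; [lia | lia | move=> a b aA bB].
have [u [v [uv fu fv]]] := arcAB _ _ aA bB; exists u, v; split=> //.
(* K_{l,t} is 2-connected: chain the arc (a, b) to (a1, b1) through a nonzero label. *)
have [a_z|nz_a] := eqVneq a z.
  have nz_b : b != z by apply: contraTneq bB => ->; rewrite -a_z (disjointFr dAB aA).
  have [u2 [v2 [uv2 fu2 fv2]]] := arcAB _ _ a1A bB.
  by rewrite (r_edge uv) (fiber_nz _ _ _ fv fv2 nz_b) -(r_edge uv2) (fiber_nz _ _ _ fu2 fu1).
have [u2 [v2 [uv2 fu2 fv2]]] := arcAB _ _ aA b1B.
by rewrite (fiber_nz _ _ _ fu fu2 nz_a) (r_edge uv2) (fiber_nz _ _ _ fv2 fv1 nz_b1) -(r_edge uv1).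
Qed.

End ImageGraph.

Lemma card_partition_avoid (T : finType) (P : {set {set T}}) (D W : {set T}) :
  partition P D -> W \subset D -> (forall C, C \in P -> exists2 x, x \in C & x \notin W) ->
  #|W| <= \sum_(C in P) #|C|.-1.
Proof.
move=> partP sWD avoid.
have -> : #|W| = \sum_(x in D | x \in W) 1.
  rewrite sum1dep_card; apply: eq_card => x; rewrite inE /=.
  by case xW: (x \in W); rewrite ?andbF ?(subsetP sWD x xW).
rewrite (set_partition_big_cond _ partP); apply: leq_sum => C PC.
have [x xC xW] := avoid C PC.
have : #|[set y in C | y \in W]| < #|C|.
  apply: proper_card; apply/properP; split; first by apply/subsetP => y /setIdP [].
  by exists x; rewrite // inE xC xW.
by rewrite sum1dep_card; lia.
Qed.

Definition del_rel (T : finType) (g : {ffun T * T -> bool}) (X : {set T}) : rel T :=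
  fun a b => [&& a \notin X, b \notin X & adj g a b].

Definition del_graph (T : finType) (g : {ffun T * T -> bool}) (X : {set T}) :
  {ffun T * T -> bool} := [ffun p => del_rel g X p.1 p.2].

Definition nonroots (T : finType) (g : {ffun T * T -> bool}) (X : {set T}) : {set T} :=
  [set w | fingraph.root (del_rel g X) w != w].

Section Components.
Variables (T : finType) (g : {ffun T * T -> bool}) (X : {set T}).
Hypothesis sg : simple_graph g.

Lemma adj_del_graph u v : adj (del_graph g X) u v = del_rel g X u v.
Proof. by rewrite /adj ffunE. Qed.

Lemma del_graph_sub u v : adj (del_graph g X) u v -> adj g u v.
Proof. by rewrite adj_del_graph => /and3P []. Qed.

Lemma del_rel_sym : symmetric (del_rel g X).
Proof. by move=> u v; rewrite /del_rel adj_sym // andbCA. Qed.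

Lemma del_graph_simple : simple_graph (del_graph g X).
Proof.
apply/andP; split; apply/forallP => u; rewrite ?adj_del_graph /del_rel ?adj_irr ?andbF //.
by apply/forallP => v; rewrite !adj_del_graph del_rel_sym.
Qed.

Lemma root_del_edge u v : adj (del_graph g X) u v ->
  fingraph.root (del_rel g X) u = fingraph.root (del_rel g X) v.
Proof.
by rewrite adj_del_graph => uv; apply/(fingraph.rootP (sym_connect_sym del_rel_sym))/connect1.
Qed.

Lemma connect_del_rel_in u v : u \in X -> connect (del_rel g X) u v -> v = u.
Proof. by move=> uX /connectP [[|w p] /=]; [move=> _ -> | rewrite /del_rel uX]. Qed.

Lemma partition_comps : partition (comps g X) (~: X).
Proof.
have csym := sym_connect_sym del_rel_sym.
apply: equivalence_partitionP => u v w _ _ _; split; first exact: connect0.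
by move=> uv; apply/idP/idP; apply: connect_trans; rewrite // csym.
Qed.

Lemma card_nonroots : #|nonroots g X| <= 2 * \sum_(C in comps g X) #|C|./2.
Proof.
have csym := sym_connect_sym del_rel_sym.
apply: leq_trans (card_partition_avoid partition_comps _ _) _.
- apply/subsetP => u; rewrite !inE; apply: contraR => /negbNE uX.
  by rewrite (connect_del_rel_in uX (connect_root _ u)).
- move=> _ /imsetP [u uX ->].
  exists (fingraph.root (del_rel g X) u); last by rewrite inE root_root // eqxx.
  move: uX; rewrite !inE connect_root andbT; apply: contra => rX.
  by rewrite (connect_del_rel_in rX (_ : connect _ _ u)) // csym connect_root.
rewrite big_distrr leq_sum // => C _.
by have := odd_double_half #|C|; case: (odd _) => /=; lia.
Qed.

End Components.

Lemma exists_labelling (T : finType) (W : {set T}) m : #|W| < m ->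
  exists (f : T -> 'I_m) (z : 'I_m),
    (forall u, (f u == z) = (u \notin W)) /\ {in W &, injective f}.
Proof.
case: m => // m W_lt.
have index_lt u : u \in W -> (index u (enum W)).+1 < m.+1.
  by move=> uW; apply: leq_ltn_trans W_lt; rewrite cardE index_mem mem_enum.
pose lbl u : nat := if u \in W then (index u (enum W)).+1 else 0.
have lbl_lt u : lbl u < m.+1 by rewrite /lbl; case: ifP => // /index_lt.
exists (fun u => inord (lbl u)), ord0; split.
  by move=> u; rewrite -val_eqE /= inordK // /lbl; case: (u \in W).
move=> u v uW vW /(congr1 val); rewrite /= !inordK // /lbl uW vW => -[eq_uv].
by rewrite -(nth_index u (_ : u \in enum W)) ?mem_enum // eq_uv nth_index ?mem_enum.
Qed.

Lemma compress_components (T : finType) (g : {ffun T * T -> bool}) (X : {set T}) m :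
  simple_graph g -> 2 * \sum_(C in comps g X) #|C|./2 < m ->
  exists h : {ffun 'I_m * 'I_m -> bool}, [/\ simple_graph h,
    #|arcs (del_graph g X)| <= #|arcs h| &
    forall l t, 1 < l -> 1 < t -> has_Klt h l t -> has_Klt g l t].
Proof.
move=> sg m_gt; set W := nonroots g X.
have [f [z [fz f_inj]]] := exists_labelling (leq_ltn_trans (card_nonroots X sg) m_gt).
have inW w : f w != z -> w \in W by rewrite fz negbK.
have f_inj_nz u v : f u != z -> f u = f v -> u = v.
  by move=> nz_u eq_uv; apply: f_inj; rewrite ?inW // -eq_uv.
have f_inj_class u v : fingraph.root (del_rel g X) u = fingraph.root (del_rel g X) v ->
    f u = f v -> u = v.
  move=> eq_r eq_uv; have [z_u|nz_u] := eqVneq (f u) z; last exact: f_inj_nz.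
  have: (u \notin W) && (v \notin W) by rewrite -!fz -eq_uv z_u eqxx.
  by rewrite !inE !negbK => /andP [/eqP ru /eqP rv]; rewrite -ru -rv eq_r.
have sg' := del_graph_simple X sg.
have r_edge := root_del_edge sg (X := X).
exists (image_graph (del_graph g X) f); split.
- exact: image_graph_simple sg' r_edge f_inj_class.
- exact: image_graph_arcs sg' r_edge f_inj_class f_inj_nz.
- move=> l t l_gt1 t_gt1 /(image_graph_Klt sg' r_edge f_inj_class f_inj_nz l_gt1 t_gt1).
  exact/has_Klt_mono/del_graph_sub.
Qed.

Lemma card_arcs_split (T : finType) (g : {ffun T * T -> bool}) (X : {set T}) :
  simple_graph g ->
  #|arcs g| <= #|arcs (del_graph g X)| + 2 * (#|X| * #|~: X|) + (#|X| * #|X| - #|X|).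
Proof.
move=> sg.
have sub : arcs g \subset arcs (del_graph g X) :|:
    (setX X (~: X) :|: setX (~: X) X :|: [set p in setX X X | p.1 != p.2]).
  apply/subsetP => -[u v]; rewrite !inE /= adj_del_graph /del_rel => uv.
  case uX: (u \in X); case vX: (v \in X); rewrite /= ?uv ?orbT //.
  by apply: contraTneq uv => ->; rewrite adj_irr.
apply: leq_trans (subset_leq_card sub) _.
rewrite !cardsU !cardsX card_offdiag; lia.
Qed.

Lemma xG_witness (T : finType) (g : {ffun T * T -> bool}) s :
  0 < xG g s -> exists2 X : {set T}, admissible g s X & #|X| = xG g s.
Proof.
rewrite /xG; have [adm0|] := posnP #|admissible g s|.
  by rewrite big_pred0 // => X; apply: (card0_eq adm0).
by case/(eq_bigmax_cond (fun X : {set T} => #|X|)) => X admX ->; exists X.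
Qed.

Lemma double_bin2 k : 2 * 'C(k, 2) = k * (k - 1).
Proof. by elim: k => // k IH; rewrite binS bin1 mulnDr IH; nia. Qed.

Lemma count_bound_top (l n N E : nat) : 2 <= l -> l - 1 <= n ->
  2 * N <= 2 * E + 2 * ((l - 1) * (n - (l - 1))) + ((l - 1) * (l - 1) - (l - 1)) ->
  N + (l * (l - 1)) %/ 2 <= (l - 1) * n + E.
Proof. by move=> *; nia. Qed.

Lemma count_bound_low (l n s x N A : nat) : x < l - 1 -> l < s -> x <= n ->
  3 * s * (3 * s - 1) <= n ->
  2 * N <= A + 2 * (x * (n - x)) + (x * x - x) ->
  A <= (2 * (s - x) + 1) * (2 * (s - x) + 1) - (2 * (s - x) + 1) ->
  N + (l * (l - 1)) %/ 2 <= (l - 1) * n.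
Proof.
move=> x_lt l_lt x_le_n n_ge bound A_le.
have e_Xn : x * (n - x) = x * n - x * x := mulnBr x n x.
have xx_le : x * x <= x * n := leq_mul (leqnn x) x_le_n.
have ln : x.+1 * n <= (l - 1) * n := leq_mul x_lt (leqnn n).
have ll : l * (l - 1) <= s * s by apply: leq_mul; lia.
set M := 2 * (s - x) + 1 in A_le.
have MM : M * M - M <= (2 * s + 1) * (2 * s).
  by rewrite -{3}[M]muln1 -mulnBr; apply: leq_mul; rewrite /M; lia.
have s_ss : s <= s * s by rewrite leq_pmulr //; lia.
rewrite mulSn in ln; rewrite mulnBr muln1 in n_ge.
lia.
Qed.

Lemma nedges_bound l t s n x (G : {ffun 'I_n * 'I_n -> bool}) :
  l <= t -> 2 <= l -> l < s -> 3 * s * (3 * s - 1) <= n -> 0 < x -> x <= l - 1 ->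
  simple_graph G -> ~~ has_Klt G l t -> xG G s = x ->
  nedges G + (l * (l - 1)) %/ 2 <= (l - 1) * n + ex_Klt (2 * (s - l + 1) + 1) l t.
Proof.
move=> l_le_t l_ge2 l_lt_s n_ge x_gt0 x_le sG KG xG_eq.
have [X admX cX] : exists2 X, admissible G s X & #|X| = x.
  by rewrite -xG_eq; apply: xG_witness; rewrite xG_eq.
have x_le_n : x <= n by rewrite -cX; apply: leq_trans (max_card _) _; rewrite card_ord.
have cXc : #|~: X| = n - x by have := cardsC X; rewrite card_ord cX; lia.
have comps_lt : 2 * \sum_(C in comps G X) #|C|./2 < 2 * (s - x) + 1.
  by move: admX; rewrite /admissible cX; lia.
have [h [sh arcs_h Klt_h]] := compress_components sG comps_lt.
have hK : ~~ has_Klt h l t by apply: contra KG; apply: Klt_h; lia.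
have split := card_arcs_split X sG; rewrite card_arcs // cX cXc in split.
have [x_lt|x_ge] := ltnP x (l - 1).
  have arcs_le := card_arcs_le sh; rewrite card_ord in arcs_le.
  have := count_bound_low x_lt l_lt_s x_le_n n_ge split (leq_trans arcs_h arcs_le); lia.
have x_eq : x = l - 1 by apply/eqP; rewrite eqn_leq x_le.
have ex_h : nedges h <= ex_Klt (2 * (s - x) + 1) l t by apply: leq_bigmax_cond; rewrite sh hK.
rewrite (_ : s - l + 1 = s - x); last by lia.
apply: count_bound_top; rewrite -?x_eq //.
by have := card_arcs sh; lia.
Qed.

Local Open Scope ring_scope.

Theorem corollary3p3 (l t s n : nat) :
  (l <= t)%N -> (3 <= l.+1)%N -> (l.+1 <= s)%N -> (2 * 'C(3 * s, 2) <= n)%N ->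
  forall x : nat, (1 <= x)%N -> (x <= l - 1)%N ->
  ((ex_KM n l t s x)%:Z <=
     ((l - 1) * n)%:Z + (ex_Klt (2 * (s - l + 1) + 1) l t)%:Z
     - ((l * (l - 1)) %/ 2)%:Z :> int).
Proof.
move=> l_le_t l_ge2 l_lt_s; rewrite double_bin2 => n_ge x x_gt0 x_le.
have Q_le : ((l * (l - 1)) %/ 2 <= (l - 1) * n)%N.
  apply: leq_trans (leq_div _ _) _; rewrite mulnC leq_mul2l.
  have : (3 * s <= 3 * s * (3 * s - 1))%N by rewrite leq_pmulr //; lia.
  lia.
have : (ex_KM n l t s x <= (l - 1) * n + ex_Klt (2 * (s - l + 1) + 1) l t
                            - (l * (l - 1)) %/ 2)%N.
  apply/bigmax_leqP => G /and4P [sG KG _ /eqP xG_eq].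
  by have := nedges_bound l_le_t l_ge2 l_lt_s n_ge x_gt0 x_le sG KG xG_eq; lia.
lia.
Qed.
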